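(* Let $v_1,\dots,v_n\geq 2$ be integers and let $Q$ be the $n\times n$ tridiagonal matrix with diagonal entries $-v_1,\dots,-v_n$ and all super- and sub-diagonal entries equal to $1$. Let $f:\mathbb{R}^n\to\mathbb{R}$, $f(z)=z^TQ^{-1}z$, and let $y=(2-v_1,\dots,2-v_n)$. If $x\in\mathbb{R}^n$ satisfies $|x_i|\leq|y_i|$ for all $i$ with strict inequality for at least one $i$, then $f(x)>f(y)$. *)

From mathcomp Require Import all_boot all_order all_algebra.
Set Implicit Arguments. Unset Strict Implicit. Unset Printing Implicit Defensive.
Import Order.TTheory GRing.Theory Num.Theory.
Local Open Scope ring_scope.

Definition tridiagQ (R : ringType) (n : nat) (v : 'I_n -> nat) : 'M[R]_n :=
  \matrix_(i < n, j < n)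
    if i == j then - (v i)%:R
    else if ((i.+1 == j)%N || (j.+1 == i)%N) then 1 else 0.

Definition quadf (R : fieldType) (n : nat) (v : 'I_n -> nat) (z : 'cV[R]_n) : R :=
  ((z^T *m invmx (tridiagQ R v) *m z) 0 0).

Definition yvec (R : ringType) (n : nat) (v : 'I_n -> nat) : 'cV[R]_n :=
  \col_(i < n) (2 - (v i)%:R).

(* The argument is a discrete maximum principle.  Row i of Q u is the second
   difference -v_i u_i + u_(i+1) + u_(i-1); since v_i >= 2, Q u <= 0 forces
   u >= 0 (look at the last index where u is minimal).  Hence Q has trivial
   kernel, so it is invertible, and every column of N = -Q^-1 (solving
   Q c = -e_j) is nonnegative; the diagonal of N is even positive.  Then
   f(z) = -z^T N z, and a quadratic form with nonnegative entries and positive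
   diagonal is strictly increasing in |z_i| in the stated sense.  Since
   y <= 0, f(y) = -(|y|)^T N |y| and the theorem follows. *)

From mathcomp Require Import all_boot all_order all_algebra.
From mathcomp Require Import zify lra.
Import Order.TTheory GRing.Theory Num.Theory.
Local Open Scope ring_scope.

Section FiniteSums.
Context {R : realDomainType}.

Lemma sum_atmost_one {I : finType} {P : pred I} (g : I -> R) :
  (forall j j', P j -> P j' -> j = j') ->
  (\sum_(j | P j) g j = 0) \/ exists2 j, P j & \sum_(j | P j) g j = g j.
Proof.
move=> uniqP; case: (pickP P) => [j Pj | noP]; last by left; rewrite big_pred0.
right; exists j => //; apply: big_pred1 => k /=.
by apply/idP/eqP => [Pk | ->]; [exact: uniqP | ].
Qed.

Lemma ltr_sum_at {I : finType} {F G : I -> R} (k : I) :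
  (forall i, F i <= G i) -> F k < G k -> \sum_i F i < \sum_i G i.
Proof.
move=> leFG ltFGk; rewrite (bigD1 k) // [X in _ < X](bigD1 k) //=.
by apply: ltr_leD => //; apply: ler_sum => i _.
Qed.

End FiniteSums.

Section TridiagonalQ.
Context {R : realDomainType} {n : nat} {v : 'I_n -> nat}.
Hypothesis v_ge2 : forall i, (2 <= v i)%N.

Local Notation Q := (tridiagQ R v).

Lemma tridiagQ_row (u : 'cV[R]_n) (i : 'I_n) :
  (Q *m u) i 0 = - (v i)%:R * u i 0
                 + \sum_(j : 'I_n | (i.+1 == j)%N) u j 0
                 + \sum_(j : 'I_n | (j.+1 == i)%N) u j 0.
Proof.
rewrite mxE (bigD1 i) //= !mxE eqxx -addrA; congr (_ + _).
rewrite [X in _ = X + _]big_mkcond [X in _ = _ + X]big_mkcond -big_split.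
rewrite big_mkcond /=.
apply: eq_bigr => j _; rewrite !mxE eq_sym.
have [-> | neq_ji] := eqVneq j i; first by rewrite !(gtn_eqF (ltnSn _)) !addr0.
case e1: (i.+1 == j)%N; case e2: (j.+1 == i)%N => /=.
- by move/eqP: e1; move/eqP: e2; lia.
- by rewrite mul1r addr0.
- by rewrite mul1r add0r.
- by rewrite mul0r addr0.
Qed.

Lemma right_neighbour_uniq (i : 'I_n) (j j' : 'I_n) :
  (i.+1 == j)%N -> (i.+1 == j')%N -> j = j'.
Proof. by move=> /eqP ej /eqP ej'; apply: val_inj; rewrite /= -ej -ej'. Qed.

Lemma left_neighbour_uniq (i : 'I_n) (j j' : 'I_n) :
  (j.+1 == i)%N -> (j'.+1 == i)%N -> j = j'.
Proof. by move=> /eqP ej /eqP ej'; apply: val_inj => /=; lia. Qed.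

(* Discrete minimum principle: Q u <= 0 forces u >= 0.  At the last index i
   where u attains a negative minimum m, the right neighbour exceeds m and the
   left one is at least m (absent neighbours count as 0 > m), so row i of Q u
   is > (2 - v_i) m >= 0. *)
Lemma tridiagQ_min_principle (u : 'cV[R]_n) :
  (forall i, (Q *m u) i 0 <= 0) -> forall i, 0 <= u i 0.
Proof.
move=> Qu_le0 i0; rewrite leNgt; apply/negP => u_neg.
pose F (i : 'I_n) := u i 0.
have [i1 _ minF] := @arg_minP _ _ _ i0 predT F isT.
set m := F i1 in minF.
have m_lt0 : m < 0 by apply: le_lt_trans (minF i0 isT) u_neg.
have [i /eqP Fi_m lastF] :=
  @arg_maxP _ _ _ i1 (fun j => F j == m) (fun j : 'I_n => (j : nat)) (eqxx m).
have right_gt : m < \sum_(j : 'I_n | (i.+1 == j)%N) F j.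
  have [-> // | [j /eqP ej ->]] := sum_atmost_one F (@right_neighbour_uniq i).
  rewrite lt_neqAle minF // andbT; apply/eqP => m_Fj.
  by have := lastF j (introT eqP (esym m_Fj)); rewrite /= -ej leEnat ltnn.
have left_ge : m <= \sum_(j : 'I_n | (j.+1 == i)%N) F j.
  have [-> | [j _ ->]] := sum_atmost_one F (@left_neighbour_uniq i).
    exact: ltW.
  exact: minF.
have vi_ge2 : 2 <= (v i)%:R :> R by rewrite (ler_nat R 2).
have : 0 <= (2 - (v i)%:R) * m by rewrite mulr_le0 //; lra.
have := Qu_le0 i; rewrite tridiagQ_row -/(F i) Fi_m.
lra.
Qed.

(* Consequently Q has trivial kernel: apply the principle to u and -u. *)
Lemma tridiagQ_kernel0 (u : 'cV[R]_n) : Q *m u = 0 -> u = 0.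
Proof.
move=> Qu0; apply/matrixP => i j; rewrite (ord1 j) mxE; apply/eqP.
have u_ge0 : 0 <= u i 0.
  by apply: tridiagQ_min_principle => k; rewrite Qu0 mxE.
have negu_ge0 : 0 <= (- u) i 0.
  by apply: tridiagQ_min_principle => k; rewrite mulmxN Qu0 oppr0 mxE.
by move: negu_ge0; rewrite mxE oppr_ge0 eq_le u_ge0 => ->.
Qed.

Lemma tridiagQ_sym : Q^T = Q.
Proof.
by apply/matrixP => i j; rewrite !mxE eq_sym orbC; case: eqVneq => // ->.
Qed.

End TridiagonalQ.

Section InverseOfQ.
Variables (R : realFieldType) (n : nat) (v : 'I_n -> nat).
Hypothesis v_ge2 : forall i, (2 <= v i)%N.

Local Notation Q := (tridiagQ R v).

(* Over a field, a trivial kernel makes Q invertible (Q is symmetric, so the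
   left kernel given by [det0P] is the transpose of a right kernel vector). *)
Lemma tridiagQ_unit : Q \in unitmx.
Proof.
rewrite unitmxE unitfE; apply/det0P => -[w w_neq0 wQ0].
suff : w^T = 0 by move=> /(congr1 trmx); rewrite trmxK trmx0; apply/eqP.
apply: (tridiagQ_kernel0 v_ge2).
by rewrite -{1}tridiagQ_sym -trmx_mul wQ0 trmx0.
Qed.

Lemma tridiagQ_mul_col_negInv (j k : 'I_n) :
  (Q *m col j (- invmx Q)) k 0 = - (k == j)%:R.
Proof.
have -> : (Q *m col j (- invmx Q)) k 0 = (Q *m - invmx Q) k j.
  by rewrite !mxE; apply: eq_bigr => l _; rewrite !mxE.
by rewrite mulmxN mulmxV ?tridiagQ_unit // !mxE.
Qed.

(* By the minimum principle, - Q^-1 is entrywise nonnegative ... *)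
Lemma negInvQ_ge0 (i j : 'I_n) : 0 <= (- invmx Q) i j.
Proof.
suff : forall i, 0 <= (col j (- invmx Q)) i 0 by move/(_ i); rewrite mxE.
apply: tridiagQ_min_principle => // k.
by rewrite tridiagQ_mul_col_negInv oppr_le0 ler0n.
Qed.

(* ... with a positive diagonal: row j of Q (- Q^-1) equals -1, while its
   off-diagonal part is a sum of nonnegative entries. *)
Lemma negInvQ_diag_gt0 (j : 'I_n) : 0 < (- invmx Q) j j.
Proof.
rewrite lt_neqAle negInvQ_ge0 andbT; apply/eqP => Njj0.
have := tridiagQ_mul_col_negInv j j.
rewrite tridiagQ_row [col _ _ j 0]mxE -Njj0 mulr0 add0r eqxx /= mulr1n.
have nbr_ge0 (P : pred 'I_n) : 0 <= \sum_(l | P l) (col j (- invmx Q)) l 0.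
  by apply: sumr_ge0 => l _; rewrite mxE negInvQ_ge0.
have := nbr_ge0 (fun l : 'I_n => (j.+1 == l)%N).
have := nbr_ge0 (fun l : 'I_n => (l.+1 == j)%N).
lra.
Qed.

End InverseOfQ.

Section NonnegativeQuadraticForms.
Context {R : realDomainType}.

Lemma quadform_expand n (N : 'M[R]_n) (z : 'cV[R]_n) :
  (z^T *m N *m z) 0 0 = \sum_j \sum_i z i 0 * N i j * z j 0.
Proof.
rewrite mxE; apply: eq_bigr => j _; rewrite mxE big_distrl /=.
by apply: eq_bigr => i _; rewrite !mxE.
Qed.

Lemma quadform_opp n (N : 'M[R]_n) (z : 'cV[R]_n) :
  ((- z)^T *m N *m (- z)) 0 0 = (z^T *m N *m z) 0 0.
Proof.
rewrite !quadform_expand; apply: eq_bigr => j _; apply: eq_bigr => i _.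
by rewrite !mxE mulNr mulrNN.
Qed.

Lemma quadterm_le (a a' b b' c : R) :
  0 <= c -> `|a| <= b -> `|a'| <= b' -> a * c * a' <= b * c * b'.
Proof.
move=> c_ge0 le_ab le_ab'; apply: le_trans (ler_norm _) _.
rewrite !normrM (ger0_norm c_ge0).
apply: ler_pM; rewrite ?mulr_ge0 //; exact: ler_pM.
Qed.

Lemma quadterm_lt (a b c : R) : 0 < c -> `|a| < b -> a * c * a < b * c * b.
Proof.
move=> c_gt0 lt_ab; apply: le_lt_trans (ler_norm _) _.
rewrite !normrM (gtr0_norm c_gt0).
have b_gt0 : 0 < b by apply: le_lt_trans lt_ab.
apply: (@le_lt_trans _ _ (`|a| * c * b)).
  by rewrite ler_wpM2l ?mulr_ge0 ?normr_ge0 ?ltW.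
by rewrite ltr_pM2r // ltr_pM2r.
Qed.

Lemma quadform_lt n (N : 'M[R]_n) (x b : 'cV[R]_n) :
  (forall i j, 0 <= N i j) -> (forall i, 0 < N i i) ->
  (forall i, `|x i 0| <= b i 0) -> (exists k, `|x k 0| < b k 0) ->
  (x^T *m N *m x) 0 0 < (b^T *m N *m b) 0 0.
Proof.
move=> N_ge0 Ndiag_gt0 le_xb [k lt_xbk]; rewrite !quadform_expand.
apply: (ltr_sum_at k) => [j | ].
  by apply: ler_sum => i _; apply: quadterm_le.
apply: (ltr_sum_at k) => [i | ]; first exact: quadterm_le.
exact: quadterm_lt.
Qed.

End NonnegativeQuadraticForms.

Theorem proposition3p5 (R : realFieldType) (n : nat) (v : 'I_n -> nat)
  (hv : forall i, (2 <= v i)%N) (x : 'cV[R]_n)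
  (hle : forall i, `|x i 0| <= `|yvec R v i 0|)
  (hlt : exists i, `|x i 0| < `|yvec R v i 0|) :
  quadf v x > quadf v (yvec R v).
Proof.
pose N := - invmx (tridiagQ R v).
have quadfE (z : 'cV[R]_n) : quadf v z = - (z^T *m N *m z) 0 0.
  by rewrite /quadf /N mulmxN mulNmx [in RHS]mxE opprK.
set y := yvec R v.
have negy_abs i : (- y) i 0 = `|y i 0|.
  by rewrite mxE ler0_norm // /y mxE subr_le0 (ler_nat R 2).
have -> : quadf v y = quadf v (- y) by rewrite !quadfE quadform_opp.
rewrite !quadfE ltrN2; apply: quadform_lt.
- exact: negInvQ_ge0.
- exact: negInvQ_diag_gt0.
- by move=> i; rewrite negy_abs.
- by have [k lt_k] := hlt; exists k; rewrite negy_abs.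
Qed.
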